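(* Let $\Omega\subset\mathbb{C}^n$ be a bounded domain and let $\mathcal R$ and $\mathcal R'$ be quasi-free Hilbert modules of rank $m$, $1\le m<\infty$, over $A(\Omega)$ with generating sets $\{f_1,\dots,f_m\}$ and $\{g_1,\dots,g_m\}$ respectively. Let $\Delta$ be the closure in $\mathcal R\oplus\mathcal R'$ of the linear span of $\{\varphi f_i\oplus\varphi g_i:\varphi\in A(\Omega),1\le i\le m\}$. Then $\Delta$ is the graph of a closed, densely defined, one-to-one linear transformation $\delta=\delta(\mathcal R,\mathcal R')$ from $\mathcal R$ to $\mathcal R'$ having dense range. Moreover, the domain and range of $\delta$ are invariant under the module action and $\delta$ is a module transformation (i.e. $\delta(\varphi h)=\varphi\delta(h)$ for $h$ in its domain and $\varphi\in A(\Omega)$).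
   Context: $A(\Omega)$ is the closure, in the supremum norm on $\Omega$, of the set of functions holomorphic on some neighbourhood of $\overline\Omega$; $\ell^2_m$ is the $m$-dimensional Hilbert space. A quasi-free Hilbert module of rank $m$ over $A(\Omega)$ is a Hilbert space $\mathcal R$ obtained as the completion of $A(\Omega)\otimes\ell^2_m$ (regarded as $\ell^2_m$-valued holomorphic functions on $\Omega$) with respect to an inner product such that: (1) for each $z\in\Omega$ evaluation at $z$ into $\ell^2_m$ is bounded, with norm locally uniformly bounded in $z$; (2) $\|\varphi F\|_{\mathcal R}\le\|\varphi\|_{A(\Omega)}\|F\|_{\mathcal R}$; (3) if $(F_i)$ is Cauchy in $\mathcal R$-norm, then $F_i(z)\to0$ for all $z$ iff $\|F_i\|_{\mathcal R}\to0$. $A(\Omega)$ acts by multiplication. For $z\in\Omega$, the localization $\mathcal R\otimes_{A(\Omega)}\mathbb C_z$ is the quotient $\mathcal R/\mathcal R_z$, $\mathcal R_z$ the closure of $\{\varphi h:\varphi\in A(\Omega),\varphi(z)=0,h\in\mathcal R\}$, with $h\otimes 1_z$ the class of $h$. A generating set of $\mathcal R$ is $\{f_1,\dots,f_m\}\subset\mathcal R$ whose $A(\Omega)$-multiples span a dense subspace of $\mathcal R$ and with $\{f_i\otimes1_z\}$ a basis of $\mathcal R\otimes_{A(\Omega)}\mathbb C_z$ for each $z$; then $\{f_i(z)\}$ is a basis of $\ell^2_m$ for every $z\in\Omega$. *)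

From HB Require Import structures.
From mathcomp Require Import all_boot all_order all_algebra.
From mathcomp Require Import all_classical all_reals all_analysis.
From mathcomp.real_closed Require Import complex.
Import Order.TTheory GRing.Theory Num.Theory.
Import numFieldNormedType.Exports.

Set Implicit Arguments.
Unset Strict Implicit.
Unset Printing Implicit Defensive.

Local Open Scope ring_scope.
Local Open Scope classical_set_scope.

(* C^n, as a normed C-vector space (complex Frechet differentiability below
   is therefore holomorphy). *)
Definition Cn (R : realType) (n : nat) : normedModType R[i] := 'rV[R[i]]_n.

Definition bounded_domain (R : realType) (n : nat) (Om : set (Cn R n)) : Prop :=
  [/\ Om !=set0, open Om, connected Om & bounded_set Om].

Definition holo_on (R : realType) (n : nat) (U : set (Cn R n))
  (g : Cn R n -> (R[i])^o) : Prop :=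
  open U /\ forall z, U z -> differentiable g z.

Definition pt (R : realType) (n : nat) (Om : set (Cn R n)) := {z : Cn R n | Om z}.

(* A(Omega): sup-norm closure on Omega of the functions holomorphic on some
   neighbourhood of the closure of Omega. *)
Definition inAOm (R : realType) (n : nat) (Om : set (Cn R n)) (phi : pt Om -> R[i])
  : Prop :=
  forall eps : R, 0 < eps -> exists (U : set (Cn R n)) (g : Cn R n -> (R[i])^o),
    [/\ closure Om `<=` U, holo_on U g &
        forall x : pt Om, Normc.normc (phi x - g (sval x)) <= eps].

Definition supnorm (R : realType) (n : nat) (Om : set (Cn R n)) (phi : pt Om -> R[i])
  : R := sup [set Normc.normc (phi x) | x in [set: pt Om]].

Definition Vfun (R : realType) (n m : nat) (Om : set (Cn R n)) :=
  pt Om -> 'rV[R[i]]_m.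

Definition actA (R : realType) (n m : nat) (Om : set (Cn R n))
  (phi : pt Om -> R[i]) (F : Vfun m Om) : Vfun m Om :=
  fun x => phi x *: F x.

Definition l2sq (R : realType) (m : nat) (v : 'rV[R[i]]_m) : R :=
  \sum_(i < m) Normc.normc (v 0 i) ^+ 2.

Definition hnorm (R : realType) (T : Type) (ip : T -> T -> R[i]) (F : T) : R :=
  Num.sqrt (complex.Re (ip F F)).

Definition lspan (R : realType) (T : lmodType R[i]) (P : set T) : set T :=
  fun x => exists (k : nat) (c : 'I_k -> R[i]) (v : 'I_k -> T),
    (forall j, P (v j)) /\ x = \sum_(j < k) c j *: v j.

Definition ncauchy (R : realType) (T : zmodType) (N : T -> R) (u : nat -> T) : Prop :=
  forall e : R, 0 < e -> exists K, forall j k, (K <= j)%N -> (K <= k)%N ->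
    N (u j - u k) < e.
Definition nconv (R : realType) (T : zmodType) (N : T -> R) (u : nat -> T) (l : T)
  : Prop :=
  forall e : R, 0 < e -> exists K, forall k, (K <= k)%N -> N (u k - l) < e.

(* Thanks to condition (3)
   the completion of A(Omega) (x) ell^2_m is realised (as in the paper) as a
   space S of ell^2_m-valued functions on Omega, with inner product ip. *)
Definition quasi_free (R : realType) (n m : nat) (Om : set (Cn R n))
  (S : set (Vfun m Om)) (ip : Vfun m Om -> Vfun m Om -> R[i]) : Prop :=
  let N := hnorm ip in
   [/\ S 0, (forall F G, S F -> S G -> S (F + G)) &
       (forall (c : R[i]) F, S F -> S (c *: F))] /\
   [/\ (forall (c : R[i]) F G H, S F -> S G -> S H ->
          ip (c *: F + G) H = c * ip F H + ip G H),
       (forall F G, S F -> S G -> ip G F = (ip F G)^*),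
       (forall F, S F -> 0 <= ip F F) &
       (forall F, S F -> ip F F = 0 -> F = 0)] /\
   (forall u : nat -> Vfun m Om, (forall k, S (u k)) -> ncauchy N u ->
      exists F, S F /\ nconv N u F) /\
   (* S is the completion of A(Omega) (x) ell^2_m *)
   [/\ (forall F : Vfun m Om, (forall i, inAOm (fun x => F x 0 i)) -> S F) &
       (forall F, S F -> forall e : R, 0 < e -> exists G : Vfun m Om,
          (forall i, inAOm (fun x => G x 0 i)) /\ N (F - G) < e)] /\
   (forall z0 : pt Om, exists (r M : R), 0 < r /\
      forall x : pt Om, `|sval x - sval z0| < (r%:C)%C ->
        forall F, S F -> Num.sqrt (l2sq (F x)) <= M * N F) /\
   (forall phi F, inAOm phi -> S F ->
      S (actA phi F) /\ N (actA phi F) <= supnorm phi * N F) /\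
   (* (3) *)
   (forall u : nat -> Vfun m Om, (forall k, S (u k)) -> ncauchy N u ->
      ((forall x i, (fun k => u k x 0 i) @ \oo --> (0 : (R[i])^o)) <->
       (fun k => N (u k)) @ \oo --> (0 : R))).

Definition nclosure (R : realType) (n m : nat) (Om : set (Cn R n))
  (S : set (Vfun m Om)) (ip : Vfun m Om -> Vfun m Om -> R[i])
  (P : set (Vfun m Om)) : set (Vfun m Om) :=
  fun F => S F /\ forall e : R, 0 < e -> exists G, P G /\ hnorm ip (F - G) < e.

Definition Rz (R : realType) (n m : nat) (Om : set (Cn R n))
  (S : set (Vfun m Om)) (ip : Vfun m Om -> Vfun m Om -> R[i]) (z : pt Om)
  : set (Vfun m Om) :=
  nclosure S ip (lspan (fun F => exists phi h,
                         [/\ inAOm phi, phi z = 0, S h & F = actA phi h])).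

Definition generating_set (R : realType) (n m : nat) (Om : set (Cn R n))
  (S : set (Vfun m Om)) (ip : Vfun m Om -> Vfun m Om -> R[i])
  (f : 'I_m -> Vfun m Om) : Prop :=
  [/\ (forall i, S (f i)),
      (forall F, S F -> nclosure S ip
         (lspan (fun G => exists phi i, inAOm phi /\ G = actA phi (f i))) F) &
      (* {f_i (x) 1_z} is a basis of S / R_z, for every z *)
      (forall z : pt Om,
         (forall c : 'I_m -> R[i],
            Rz S ip z (\sum_(i < m) c i *: f i) -> forall i, c i = 0) /\
         (forall h, S h -> exists c : 'I_m -> R[i],
            Rz S ip z (h - \sum_(i < m) c i *: f i)))].

Definition dsnorm (R : realType) (T : Type) (ip ip' : T -> T -> R[i]) (p : T * T) : R :=
  Num.sqrt (hnorm ip p.1 ^+ 2 + hnorm ip' p.2 ^+ 2).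

Definition Delta (R : realType) (n m : nat) (Om : set (Cn R n))
  (S S' : set (Vfun m Om)) (ip ip' : Vfun m Om -> Vfun m Om -> R[i])
  (f g : 'I_m -> Vfun m Om) : set (Vfun m Om * Vfun m Om) :=
  fun p => [/\ S p.1, S' p.2 &
    forall e : R, 0 < e -> exists q,
      lspan (fun r => exists phi i,
               inAOm phi /\ r = (actA phi (f i), actA phi (g i))) q /\
      dsnorm ip ip' (p - q) < e].

From HB Require Import structures.
From mathcomp Require Import all_boot all_order all_algebra.
From mathcomp Require Import all_classical all_reals all_analysis.
From mathcomp.real_closed Require Import complex.
From mathcomp Require Import ring lra.
Import Order.TTheory GRing.Theory Num.Theory.
Import numFieldNormedType.Exports.
Local Open Scope complex_scope.
Local Open Scope ring_scope.
Local Open Scope classical_set_scope.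

(* Evaluation at a point z vanishes on R_z, so by the generating property the
   matrix A(z) with rows f_1(z), ..., f_m(z) is invertible, and so is the matrix
   B(z) with rows g_1(z), ..., g_m(z).  On a generator phi f_i (+) phi g_i both
   h(z) A(z)^-1 and k(z) B(z)^-1 equal phi(z) e_i; evaluation being continuous,
   h(z) A(z)^-1 = k(z) B(z)^-1 holds for every (h, k) in Delta and every z.  So
   each component of a pair in Delta determines the other: Delta is the graph of
   an injective map.  Linearity, closedness and invariance under the action come
   from Delta being a closed submodule (A(Omega) is an algebra of bounded
   functions), density of domain and range from the generating sets. *)

Definition pre_hilbert {R : realType} {T : lmodType R[i]} (S : set T)
    (ip : T -> T -> R[i]) :=
  [/\ S 0, (forall F G, S F -> S G -> S (F + G)) &
      (forall (c : R[i]) F, S F -> S (c *: F))] /\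
  [/\ (forall (c : R[i]) F G H, S F -> S G -> S H ->
         ip (c *: F + G) H = c * ip F H + ip G H),
      (forall F G, S F -> S G -> ip G F = (ip F G)^*),
      (forall F, S F -> 0 <= ip F F) &
      (forall F, S F -> ip F F = 0 -> F = 0)].

Section PreHilbert.
Context {R : realType} {T : lmodType R[i]} {S : set T} {ip : T -> T -> R[i]}.
Hypothesis ph : pre_hilbert S ip.
Local Notation N := (hnorm ip).

Lemma mem_ph0 : S 0. Proof. by case: ph => [[]]. Qed.

Lemma mem_phD {F G} : S F -> S G -> S (F + G).
Proof. by case: ph => [[_ h _] _]; apply: h. Qed.

Lemma mem_phZ c {F} : S F -> S (c *: F).
Proof. by case: ph => [[_ _ h] _]; apply: h. Qed.

Lemma mem_phB {F G} : S F -> S G -> S (F - G).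
Proof. by move=> SF SG; rewrite -scaleN1r; apply/mem_phD/mem_phZ. Qed.

Lemma mem_phZD c {F G} : S F -> S G -> S (c *: F + G).
Proof. by move=> SF SG; apply/mem_phD/SG/mem_phZ. Qed.

Lemma ipZDl c {F G H} : S F -> S G -> S H -> ip (c *: F + G) H = c * ip F H + ip G H.
Proof. by case: ph => _ [h _ _ _]; apply: h. Qed.

Lemma ip_conj {F G} : S F -> S G -> ip G F = (ip F G)^*.
Proof. by case: ph => _ [_ h _ _]; apply: h. Qed.

Lemma ip_self_ge0 {F} : S F -> 0 <= ip F F.
Proof. by case: ph => _ [_ _ h _]; apply: h. Qed.

Lemma ip_self_eq0 {F} : S F -> ip F F = 0 -> F = 0.
Proof. by case: ph => _ [_ _ _ h]; apply: h. Qed.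

Lemma ip0l {H} : S H -> ip 0 H = 0.
Proof.
move=> SH; have := ipZDl 1 mem_ph0 mem_ph0 SH; rewrite scale1r addr0 mul1r.
by move=> /(congr1 (fun x => x - ip 0 H)); rewrite subrr addrK.
Qed.

Lemma ip0r {H} : S H -> ip H 0 = 0.
Proof. by move=> SH; rewrite (ip_conj mem_ph0 SH) ip0l // rmorph0. Qed.

Lemma ipZl c {F H} : S F -> S H -> ip (c *: F) H = c * ip F H.
Proof.
by move=> SF SH; rewrite -[c *: F]addr0 (ipZDl c SF mem_ph0 SH) ip0l // addr0.
Qed.

Lemma ipDl {F G H} : S F -> S G -> S H -> ip (F + G) H = ip F H + ip G H.
Proof. by move=> SF SG SH; have := ipZDl 1 SF SG SH; rewrite scale1r mul1r. Qed.

Lemma ipZr c {F H} : S F -> S H -> ip F (c *: H) = c^* * ip F H.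
Proof.
move=> SF SH; rewrite (ip_conj (mem_phZ c SH) SF) (ipZl c SH SF) rmorphM.
by rewrite [ip F H](ip_conj SH SF).
Qed.

Lemma ipDr {F G H} : S F -> S G -> S H -> ip H (F + G) = ip H F + ip H G.
Proof.
move=> SF SG SH; rewrite (ip_conj (mem_phD SF SG) SH) (ipDl SF SG SH) rmorphD.
by rewrite [ip H F](ip_conj SF SH) [ip H G](ip_conj SG SH).
Qed.

Lemma Re_ip_self_ge0 {F} : S F -> 0 <= complex.Re (ip F F).
Proof. by move=> /ip_self_ge0; rewrite lecE => /andP[]. Qed.

Lemma ip_selfE {F} : S F -> ip F F = (complex.Re (ip F F))%:C.
Proof.
move=> /ip_self_ge0; rewrite lecE => /andP[+ _].
by case: (ip F F) => a b /= /eqP ->.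
Qed.

Lemma Re_ip_expand (t : R) {F G} : S F -> S G ->
  complex.Re (ip (F + t%:C *: G) (F + t%:C *: G)) =
  complex.Re (ip F F) + 2 * t * complex.Re (ip F G) + t ^+ 2 * complex.Re (ip G G).
Proof.
move=> SF SG; have SG' := mem_phZ t%:C SG; have SFG := mem_phD SF SG'.
rewrite (ipDl SF SG' SFG) (ipZl _ SG SFG) (ipDr SF SG' SF) (ipDr SF SG' SG).
rewrite (ipZr _ SF SG) (ipZr _ SG SG) (ip_conj SF SG).
move: (ip F F) (ip F G) (ip G G) => [a1 a2] [b1 b2] [c1 c2] /=; ring.
Qed.

(* Cauchy-Schwarz: the quadratic [t |-> N (F + t G) ^+ 2] is nonnegative at its
   minimum [t = - Re (ip F G) / N G ^+ 2]. *)
Lemma Re_ip_le_hnorm {F G} : S F -> S G -> complex.Re (ip F G) <= N F * N G.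
Proof.
move=> SF SG; rewrite /hnorm -sqrtrM ?Re_ip_self_ge0 //.
apply: le_trans (ler_norm _) _; rewrite -sqrtr_sqr ler_sqrt ?mulr_ge0 ?Re_ip_self_ge0 //.
set a := complex.Re (ip F F); set r := complex.Re (ip F G); set c := complex.Re (ip G G).
have c0 : 0 <= c by apply: Re_ip_self_ge0.
have [cz|cp] := eqVneq c 0.
  have G0 : G = 0 by apply: ip_self_eq0 => //; rewrite ip_selfE // -/c cz.
  by rewrite /r G0 ip0r // /= expr0n /= mulr_ge0 // Re_ip_self_ge0.
have := Re_ip_self_ge0 (mem_phD SF (mem_phZ (- r / c)%:C SG)).
rewrite Re_ip_expand // -/a -/r -/c.
have -> : a + 2 * (- r / c) * r + (- r / c) ^+ 2 * c = (a * c - r ^+ 2) / c by field.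
by move=> h; have := mulr_ge0 h c0; rewrite divfK // subr_ge0.
Qed.

Lemma hnorm_ge0 F : 0 <= N F.
Proof. exact: sqrtr_ge0. Qed.

Lemma hnorm0 : N 0 = 0.
Proof. by rewrite /hnorm (ip0l mem_ph0); exact: sqrtr0. Qed.

Lemma hnormD {F G} : S F -> S G -> N (F + G) <= N F + N G.
Proof.
move=> SF SG; have := Re_ip_expand 1 SF SG; rewrite scale1r => expand.
rewrite -(ger0_norm (addr_ge0 (hnorm_ge0 F) (hnorm_ge0 G))) -sqrtr_sqr.
rewrite {1}/hnorm ler_sqrt ?sqr_ge0 // expand sqrrD /hnorm !sqr_sqrtr ?Re_ip_self_ge0 //.
have := Re_ip_le_hnorm SF SG; rewrite /hnorm mulr2n; lra.
Qed.

Lemma hnormZ c {F} : S F -> N (c *: F) = Normc.normc c * N F.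
Proof.
move=> SF; rewrite /hnorm (ipZl c SF (mem_phZ c SF)) (ipZr c SF SF) (ip_selfE SF).
case: c => a b; move: (complex.Re (ip F F)) (Re_ip_self_ge0 SF) => p p0 /=.
by rewrite -sqrtrM ?addr_ge0 ?sqr_ge0 //; congr Num.sqrt; ring.
Qed.

Lemma hnorm_distC {F G} : S F -> S G -> N (F - G) = N (G - F).
Proof.
move=> SF SG; rewrite -opprB -[- (G - F)]scaleN1r hnormZ; last exact: mem_phB.
by rewrite /Normc.normc /= oppr0 expr0n addr0 sqrrN expr1n sqrtr1 mul1r.
Qed.

Lemma hnormZD_le c {F G} : S F -> S G -> N (c *: F + G) <= Normc.normc c * N F + N G.
Proof. by move=> SF SG; rewrite -(hnormZ c SF); apply/hnormD/SG/mem_phZ. Qed.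

Lemma hnorm_distD {F G H} : S F -> S G -> S H -> N (F - H) <= N (F - G) + N (G - H).
Proof.
move=> SF SG SH; have -> : F - H = (F - G) + (G - H) by rewrite addrA subrK.
by apply: hnormD; apply: mem_phB.
Qed.

End PreHilbert.

Section DirectSum.
Context {R : realType} {T : Type} {ip ip' : T -> T -> R[i]}.

Lemma hnorm_le_dsnorm1 p : hnorm ip p.1 <= dsnorm ip ip' p.
Proof.
rewrite -[leLHS](ger0_norm (sqrtr_ge0 _)) -sqrtr_sqr ler_sqrt ?addr_ge0 ?sqr_ge0 //.
by rewrite lerDl sqr_ge0.
Qed.

Lemma hnorm_le_dsnorm2 p : hnorm ip' p.2 <= dsnorm ip ip' p.
Proof.
rewrite -[leLHS](ger0_norm (sqrtr_ge0 _)) -sqrtr_sqr ler_sqrt ?addr_ge0 ?sqr_ge0 //.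
by rewrite lerDr sqr_ge0.
Qed.

Lemma dsnorm_le_add p : dsnorm ip ip' p <= hnorm ip p.1 + hnorm ip' p.2.
Proof.
have a0 : 0 <= hnorm ip p.1 by exact: sqrtr_ge0.
have b0 : 0 <= hnorm ip' p.2 by exact: sqrtr_ge0.
rewrite -[leRHS]ger0_norm ?addr_ge0 // -sqrtr_sqr ler_sqrt ?sqr_ge0 //; nra.
Qed.

End DirectSum.

Section Span.
Context {R : realType} {T : lmodType R[i]} {P : set T}.

Lemma lspan_ind (X : set T) : X 0 ->
  (forall c x y, X x -> X y -> X (c *: x + y)) -> P `<=` X -> lspan P `<=` X.
Proof.
move=> X0 XZD PX x [k [c [v [Pv ->]]]].
elim: k c v Pv => [|k IH] c v Pv; first by rewrite big_ord0.
by rewrite big_ord_recr /= addrC; apply: XZD; [exact: PX | exact: IH].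
Qed.

Lemma lspan1 x : P x -> lspan P x.
Proof.
move=> Px; exists 1%N, (fun _ => 1), (fun _ => x); split => //.
by rewrite big_ord1 scale1r.
Qed.

Lemma lspan0 : lspan P 0.
Proof. by exists 0%N, (fun _ => 0), (fun _ => 0); split => [[]//|]; rewrite big_ord0. Qed.

Lemma lspanZ c x : lspan P x -> lspan P (c *: x).
Proof.
move=> [k [a [v [Pv ->]]]]; exists k, (fun j => c * a j), v; split => //.
by rewrite scaler_sumr; apply: eq_bigr => j _; rewrite scalerA.
Qed.

Lemma lspanD x y : lspan P x -> lspan P y -> lspan P (x + y).
Proof.
move=> [k1 [a [v [Pv ->]]]] [k2 [b [w [Pw ->]]]].
exists (k1 + k2)%N, (fun i => match fintype.split i with inl j => a j | inr j => b j end),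
  (fun i => match fintype.split i with inl j => v j | inr j => w j end); split.
  by move=> i; case: (fintype.split i).
rewrite big_split_ord /=; congr (_ + _); apply: eq_bigr => j _.
  by have := unsplitK (inl j : 'I_k1 + 'I_k2); rewrite /= => ->.
by have := unsplitK (inr j : 'I_k1 + 'I_k2); rewrite /= => ->.
Qed.

Lemma lspanZD c x y : lspan P x -> lspan P y -> lspan P (c *: x + y).
Proof. by move=> Px Py; apply/lspanD/Py/lspanZ. Qed.

End Span.

Section ComplexNorm.
Context {R : realType}.
Local Notation normc := (@Normc.normc R).

Lemma normc_ge0 (x : R[i]) : 0 <= normc x.
Proof. by case: x => a b; apply: sqrtr_ge0. Qed.

Lemma ler_normc_sum k (a : 'I_k -> R[i]) : normc (\sum_(j < k) a j) <= \sum_(j < k) normc (a j).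
Proof.
elim: k a => [|k IH] a; first by rewrite !big_ord0 Normc.normc0.
rewrite !big_ord_recr /=; eapply le_trans; first exact: le_normcD.
by rewrite lerD2r; apply: IH.
Qed.

Lemma normc_entry_le_l2 {m} (v : 'rV[R[i]]_m) i : normc (v 0 i) <= Num.sqrt (l2sq v).
Proof.
have s0 : 0 <= l2sq v by apply: sumr_ge0 => j _; exact: sqr_ge0.
rewrite -(ger0_norm (normc_ge0 _)) -sqrtr_sqr ler_sqrt //.
by rewrite /l2sq (bigD1 i) //= lerDl; apply: sumr_ge0 => j _; exact: sqr_ge0.
Qed.

Lemma normc_entry_mulmx_le {m} (v : 'rV[R[i]]_m) (X : 'M[R[i]]_m) j :
  normc ((v *m X) 0 j) <= Num.sqrt (l2sq v) * \sum_l normc (X l j).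
Proof.
rewrite mxE mulr_sumr; eapply le_trans; first exact: ler_normc_sum.
apply: ler_sum => l _; rewrite Normc.normcM.
by apply: ler_wpM2r; [exact: normc_ge0 | exact: normc_entry_le_l2].
Qed.

Lemma normc_small_eq0 {x : R[i]} {C : R} : 0 <= C ->
  (forall e, 0 < e -> normc x <= C * e) -> x = 0.
Proof.
move=> C0 small; apply: Normc.eq0_normc; apply/eqP; rewrite eq_le normc_ge0 andbT.
apply/ler_addgt0Pr => e e0; rewrite add0r.
have C1 : 0 < C + 1 by rewrite ltr_wpDl.
apply: le_trans (small (e / (C + 1)) _) _; first by rewrite divr_gt0.
by rewrite mulrA ler_pdivrMr //; nra.
Qed.

End ComplexNorm.

Lemma affine_tolerance {R : realType} {C e : R} : 0 <= C -> 0 < e ->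
  exists2 d, 0 < d & forall a b, 0 <= a -> a < d -> b < d -> C * a + b < e.
Proof.
move=> C0 e0; have C1 : 0 < C + 1 by rewrite ltr_wpDl.
exists (e / (C + 1)); first by rewrite divr_gt0.
move=> a b a0 ad bd; have h : (C + 1) * a < e by rewrite mulrC -ltr_pdivlMr.
have : b < e / (C + 1) := bd.
rewrite ltr_pdivlMr //; nra.
Qed.

Section AOmega.
Context {R : realType} {n m : nat} {Om : set (Cn R n)}.
Local Notation normc := (@Normc.normc R).

Lemma inAOm_const (a : R[i]) : inAOm (fun _ : pt Om => a).
Proof.
move=> e e0; exists setT, (fun _ => a : (R[i])^o); split => //.
  by split=> [|z _]; [exact: openT | exact: differentiable_cst].
by move=> x; rewrite subrr Normc.normc0 ltW.
Qed.

Definition normc_bounded (phi : pt Om -> R[i]) :=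
  exists2 B, 0 <= B & forall x, normc (phi x) <= B.

Lemma inAOmM phi psi : normc_bounded phi -> normc_bounded psi ->
  inAOm phi -> inAOm psi -> inAOm (fun x => phi x * psi x).
Proof.
move=> [Bp Bp0 phiB] [Bq Bq0 psiB] Aphi Apsi e e0.
set K := Bp + Bq + 1; have K0 : 0 < K by rewrite ltr_wpDl ?addr_ge0.
set d := Num.min 1 (e / K).
have d0 : 0 < d by rewrite lt_min ltr01 divr_gt0.
have d1 : d <= 1 by rewrite ge_min lexx.
have dK : d * K <= e by rewrite -ler_pdivlMr // ge_min lexx orbT.
have [U1 [g1 [cl1 [open1 holo1] phig1]]] := Aphi d d0.
have [U2 [g2 [cl2 [open2 holo2] psig2]]] := Apsi d d0.
exists (U1 `&` U2), (fun x => (g1 x * g2 x : (R[i])^o)); split.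
- by move=> x clx; split; [exact: cl1 | exact: cl2].
- split=> [|z [z1 z2]]; first exact: openI.
  by apply: differentiableM; [exact: holo1 | exact: holo2].
move=> x; set a := phi x; set b := psi x; set a' := g1 (sval x); set b' := g2 (sval x).
have -> : a * b - a' * b' = a * (b - b') + (a - a') * b' by ring.
eapply le_trans; first exact: le_normcD.
rewrite !Normc.normcM.
have b'B : normc b' <= Bq + d.
  have -> : b' = b - (b - b') by rewrite opprB addrC subrK.
  eapply le_trans; first exact: le_normcD.
  by rewrite normcN; exact: lerD (psiB x) (psig2 x).
have t1 := ler_pM (normc_ge0 _) (normc_ge0 _) (phiB x) (psig2 x).
have t2 := ler_pM (normc_ge0 _) (normc_ge0 _) (phig1 x) b'B.
apply: le_trans (lerD t1 t2) _; move: dK; rewrite /K; nra.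
Qed.

Lemma actAZD phi c (F G : Vfun m Om) :
  actA phi (c *: F + G) = c *: actA phi F + actA phi G.
Proof. by apply/funext => x; rewrite /actA !fctE /= scalerDr !scalerA mulrC. Qed.

Lemma actA0 phi : actA phi (0 : Vfun m Om) = 0.
Proof. by apply/funext => x; rewrite /actA /= scaler0. Qed.

Lemma actAB phi (F G : Vfun m Om) : actA phi (F - G) = actA phi F - actA phi G.
Proof. by apply/funext => x; rewrite /actA !fctE /= scalerBr. Qed.

Lemma actA_mul phi psi (F : Vfun m Om) :
  actA phi (actA psi F) = actA (fun x => phi x * psi x) F.
Proof. by apply/funext => x; rewrite /actA scalerA. Qed.

End AOmega.

Lemma quasi_free_pre_hilbert {R : realType} {n m : nat} {Om : set (Cn R n)}
  {S : set (Vfun m Om)} {ip : Vfun m Om -> Vfun m Om -> R[i]} :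
  quasi_free S ip -> pre_hilbert S ip.
Proof. by case=> subspace [inner_product _]. Qed.

Section QuasiFree.
Context {R : realType} {n m : nat} {Om : set (Cn R n)}.
Context {S : set (Vfun m Om)} {ip : Vfun m Om -> Vfun m Om -> R[i]}.
Hypothesis qf : quasi_free S ip.
Let ph := quasi_free_pre_hilbert qf.
Local Notation N := (hnorm ip).
Local Notation normc := (@Normc.normc R).

Lemma mem_qf_inA (F : Vfun m Om) : (forall i, inAOm (fun x => F x 0 i)) -> S F.
Proof. by case: qf => _ [_ [_ [[+ _] _]]]; apply. Qed.

Lemma mem_qf_const (v : 'rV[R[i]]_m) : S (fun _ => v).
Proof. by apply: mem_qf_inA => i; exact: inAOm_const. Qed.

Lemma mem_qf_act {phi F} : inAOm phi -> S F -> S (actA phi F).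
Proof. by case: qf => _ [_ [_ [_ [_ [+ _]]]]] => act Aphi SF; case: (act _ _ Aphi SF). Qed.

Lemma hnorm_act_le {phi F} : inAOm phi -> S F -> N (actA phi F) <= supnorm phi * N F.
Proof. by case: qf => _ [_ [_ [_ [_ [+ _]]]]] => act Aphi SF; case: (act _ _ Aphi SF). Qed.

Lemma eval_bounded (z : pt Om) :
  exists2 M, 0 <= M & forall F, S F -> Num.sqrt (l2sq (F z)) <= M * N F.
Proof.
case: qf => _ [_ [_ [_ [evalb _]]]]; have [r [M [r0 evalM]]] := evalb z.
exists `|M| => // F SF; apply: le_trans (evalM z _ F SF) _.
  by rewrite subrr normr0 ltcE /= eqxx r0.
by apply: ler_wpM2r; [exact: hnorm_ge0 | exact: ler_norm].
Qed.

(* If the image of [phi] had no supremum, [supnorm phi] would be the junk value 0,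
   and the contractivity of the action would force [phi *: 1 = 0], i.e. [phi = 0]. *)
Lemma inAOm_bounded (phi : pt Om -> R[i]) : (0 < m)%N -> inAOm phi -> normc_bounded phi.
Proof.
move=> m0 Aphi.
have [hs|nhs] := pselect (has_sup [set normc (phi x) | x in [set: pt Om]]).
  exists (Num.max 0 (supnorm phi)); first by rewrite le_max lexx.
  move=> x; rewrite le_max; apply/orP; right.
  by apply: sup_upper_bound => //; exists x.
exists 0 => // x; pose one : Vfun m Om := fun _ => const_mx 1.
have Sone : S one := mem_qf_const _.
have := hnorm_act_le Aphi Sone; rewrite /supnorm sup_out // mul0r => N0.
have [M M0 evalM] := eval_bounded x.
have := normc_entry_le_l2 (actA phi one x) (Ordinal m0).
move/le_trans/(_ (evalM _ (mem_qf_act Aphi Sone))).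
have -> : N (actA phi one) = 0 by apply/eqP; rewrite eq_le N0 hnorm_ge0.
by rewrite mulr0 /actA /one !mxE mulr1.
Qed.

Lemma Rz_eval0 z F : Rz S ip z F -> F z = 0.
Proof.
move=> [SF approx]; apply/rowP => i; rewrite mxE.
have [M M0 evalM] := eval_bounded z.
apply: (normc_small_eq0 M0) => e e0.
have [G [spanG FG]] := approx e e0.
have [SG Gz] : S G /\ G z = 0.
  apply: (@lspan_ind _ _ _ (fun G => S G /\ G z = 0) _ _ _ G spanG).
  - by split; [exact: mem_ph0 ph |].
  - move=> c x y [Sx xz] [Sy yz]; split; first exact: (mem_phZD ph).
    by rewrite !fctE /= xz yz scaler0 addr0.
  - move=> _ [phi [h [Aphi phiz Sh ->]]]; split; first exact: mem_qf_act.
    by rewrite /actA phiz scale0r.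
have -> : F z 0 i = (F - G) z 0 i by rewrite !fctE /= Gz subr0.
apply: le_trans (normc_entry_le_l2 _ _) _.
apply: le_trans (evalM _ (mem_phB ph SF SG)) _.
by apply: ler_wpM2l => //; apply: ltW.
Qed.

Definition gen_mx (f : 'I_m -> Vfun m Om) z : 'M[R[i]]_m := \matrix_(i < m) f i z.

Lemma gen_mx_unit {f} z : generating_set S ip f -> gen_mx f z \in unitmx.
Proof.
move=> [_ _ gen_basis]; rewrite -row_full_unit -sub1mx; apply/row_subP => i.
have [_ spans] := gen_basis z.
have [c /Rz_eval0] := spans _ (mem_qf_const (row i 1%:M)).
rewrite !fctE fct_sumE /= => /eqP; rewrite subr_eq0 => /eqP ->.
apply/submxP; exists (\row_j c j); rewrite mulmx_sum_row; apply: eq_bigr => j _.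
by rewrite rowK mxE.
Qed.

Lemma coord_bounded z (X : 'M[R[i]]_m) j :
  exists2 C, 0 <= C & forall F, S F -> normc ((F z *m X) 0 j) <= C * N F.
Proof.
have [M M0 evalM] := eval_bounded z.
have K0 : 0 <= \sum_l normc (X l j) by apply: sumr_ge0 => l _; exact: normc_ge0.
exists (M * \sum_l normc (X l j)) => [|F SF]; first exact: mulr_ge0.
apply: le_trans (normc_entry_mulmx_le _ _ _) _.
by rewrite mulrAC ler_wpM2r //; exact: evalM.
Qed.

End QuasiFree.

Section GraphFun.
Context {A B : Type}.
Variables (b0 : B) (P : set (A * B)).

Definition graph_dom : set A := [set a | exists b, P (a, b)].

Definition graph_fun (a : A) : B :=
  if pselect (exists b, P (a, b)) is left ex then sval (cid ex) else b0.

Hypothesis functional : forall a b b', P (a, b) -> P (a, b') -> b = b'.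

Lemma graph_funP a b : P (a, b) <-> graph_dom a /\ graph_fun a = b.
Proof.
have graph_fun_graph a' : graph_dom a' -> P (a', graph_fun a').
  by rewrite /graph_fun => dom_a'; case: pselect => // ex; exact: (svalP (cid ex)).
split=> [Pab | [dom_a <-]]; last exact: graph_fun_graph.
have dom_a : graph_dom a by exists b.
by split=> //; apply: functional (graph_fun_graph _ dom_a) Pab.
Qed.

Lemma graph_funE : P = [set p | graph_dom p.1 /\ p.2 = graph_fun p.1].
Proof.
apply/seteqP; split=> -[a b] /=; first by move/graph_funP=> [dom_a <-].
by move=> [dom_a ->]; apply/graph_funP.
Qed.

End GraphFun.

Section Delta.
Context {R : realType} {n m : nat} {Om : set (Cn R n)}.
Context {S S' : set (Vfun m Om)} {ip ip' : Vfun m Om -> Vfun m Om -> R[i]}.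
Context {f g : 'I_m -> Vfun m Om}.
Hypotheses (m0 : (0 < m)%N) (qf : quasi_free S ip) (qf' : quasi_free S' ip').
Hypotheses (gf : generating_set S ip f) (gg : generating_set S' ip' g).
Let ph := quasi_free_pre_hilbert qf.
Let ph' := quasi_free_pre_hilbert qf'.
Local Notation N := (hnorm ip).
Local Notation N' := (hnorm ip').
Local Notation Dl := (Delta S S' ip ip' f g).
Local Notation gen_span := (lspan (fun r => exists phi i,
  inAOm phi /\ r = (actA phi (f i), actA phi (g i)))).

Lemma gen_span_mem {q} : gen_span q -> S q.1 /\ S' q.2.
Proof.
move=> spq; apply: (@lspan_ind _ _ _ (fun q => S q.1 /\ S' q.2) _ _ _ q spq).
- by split; [exact: (mem_ph0 ph) | exact: (mem_ph0 ph')].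
- by move=> c x y [Sx1 Sx2] [Sy1 Sy2]; split; [exact: (mem_phZD ph) | exact: (mem_phZD ph')].
move=> _ [phi [i [Aphi ->]]]; have [Sf _ _] := gf; have [Sg _ _] := gg.
by split=> /=; [exact: (mem_qf_act qf) | exact: (mem_qf_act qf')].
Qed.

Lemma DeltaP h k : Dl (h, k) <->
  [/\ S h, S' k & forall e, 0 < e ->
     exists q, gen_span q /\ N (h - q.1) < e /\ N' (k - q.2) < e].
Proof.
split=> -[Sh Sk approx]; split=> // e e0.
  have [q [spq qe]] := approx e e0; exists q; split=> //.
  by split; apply: le_lt_trans qe; [exact: hnorm_le_dsnorm1 | exact: hnorm_le_dsnorm2].
have e2 : 0 < e / 2 by lra.
have [q [spq [hq kq]]] := approx _ e2; exists q; split=> //.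
by apply: le_lt_trans (dsnorm_le_add _) _ => /=; lra.
Qed.

Lemma Delta_gen phi i : inAOm phi -> Dl (actA phi (f i), actA phi (g i)).
Proof.
move=> Aphi; have [Sf _ _] := gf; have [Sg _ _] := gg.
apply/DeltaP; split; [exact: (mem_qf_act qf) | exact: (mem_qf_act qf') |].
move=> e e0; exists (actA phi (f i), actA phi (g i)); split.
  by apply: lspan1; exists phi, i.
by rewrite /= !subrr (hnorm0 ph) (hnorm0 ph').
Qed.

Lemma Delta0 : Dl (0, 0).
Proof.
apply/DeltaP; split; [exact: (mem_ph0 ph) | exact: (mem_ph0 ph') |].
move=> e e0; exists 0; split; first exact: lspan0.
by rewrite /= !subrr (hnorm0 ph) (hnorm0 ph').
Qed.

Lemma DeltaZD c {h k h' k'} : Dl (h, k) -> Dl (h', k') -> Dl (c *: h + h', c *: k + k').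
Proof.
move=> /DeltaP [Sh Sk approx] /DeltaP [Sh' Sk' approx']; apply/DeltaP.
split; [exact: (mem_phZD ph) | exact: (mem_phZD ph') |] => e e0.
have [d d0 tol] := affine_tolerance (normc_ge0 c) e0.
have [q [spq [hq kq]]] := approx d d0; have [q' [spq' [hq' kq']]] := approx' d d0.
have [Sq1 Sq2] := gen_span_mem spq; have [Sq1' Sq2'] := gen_span_mem spq'.
exists (c *: q + q'); split; first exact: lspanZD.
have regroup (T : lmodType R[i]) (a b a' b' : T) :
    c *: a + a' - (c *: b + b') = c *: (a - b) + (a' - b').
  by rewrite scalerBr opprD addrACA.
split; rewrite /= regroup.
  apply: le_lt_trans (hnormZD_le ph c (mem_phB ph Sh Sq1) (mem_phB ph Sh' Sq1')) _.
  exact: tol (hnorm_ge0 _) hq hq'.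
apply: le_lt_trans (hnormZD_le ph' c (mem_phB ph' Sk Sq2) (mem_phB ph' Sk' Sq2')) _.
exact: tol (hnorm_ge0 _) kq kq'.
Qed.

Lemma gen_span_act {phi q} : inAOm phi -> gen_span q -> gen_span (actA phi q.1, actA phi q.2).
Proof.
move=> Aphi spq.
apply: (@lspan_ind _ _ _ (fun q => gen_span (actA phi q.1, actA phi q.2)) _ _ _ q spq).
- by rewrite /= !actA0; exact: lspan0.
- move=> c x y spx spy; rewrite /= !actAZD.
  set a := actA phi x.1; set a' := actA phi x.2.
  set b := actA phi y.1; set b' := actA phi y.2.
  have -> : (c *: a + b, c *: a' + b') = c *: (a, a') + (b, b') by [].
  exact: lspanZD.
move=> _ [psi [i [Apsi ->]]]; rewrite /= !actA_mul.
apply: lspan1; exists (fun x => phi x * psi x), i; split=> //.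
by apply: inAOmM => //; apply: (inAOm_bounded qf).
Qed.

Lemma Delta_act {phi h k} : inAOm phi -> Dl (h, k) -> Dl (actA phi h, actA phi k).
Proof.
move=> Aphi /DeltaP [Sh Sk approx]; apply/DeltaP.
split; [exact: (mem_qf_act qf) | exact: (mem_qf_act qf') |] => e e0.
have [d d0 tol] := affine_tolerance (normr_ge0 (supnorm phi)) e0.
have [q [spq [hq kq]]] := approx d d0; have [Sq1 Sq2] := gen_span_mem spq.
exists (actA phi q.1, actA phi q.2); split; first exact: gen_span_act.
split; rewrite /= -actAB.
  apply: le_lt_trans (hnorm_act_le qf Aphi (mem_phB ph Sh Sq1)) _.
  apply: le_lt_trans (ler_wpM2r (hnorm_ge0 _) (ler_norm _)) _.
  by rewrite -[X in X < _]addr0; apply: tol (hnorm_ge0 _) hq d0.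
apply: le_lt_trans (hnorm_act_le qf' Aphi (mem_phB ph' Sk Sq2)) _.
apply: le_lt_trans (ler_wpM2r (hnorm_ge0 _) (ler_norm _)) _.
by rewrite -[X in X < _]addr0; apply: tol (hnorm_ge0 _) kq d0.
Qed.

Lemma gen_span_coord z {q} : gen_span q ->
  q.1 z *m invmx (gen_mx f z) = q.2 z *m invmx (gen_mx g z).
Proof.
move=> spq; have unitA := gen_mx_unit qf z gf; have unitB := gen_mx_unit qf' z gg.
apply: (@lspan_ind _ _ _ (fun q => q.1 z *m invmx (gen_mx f z) =
   q.2 z *m invmx (gen_mx g z)) _ _ _ q spq).
- by rewrite /= !mul0mx.
- by move=> c x y /= xz yz; rewrite !fctE /= !mulmxDl -!scalemxAl xz yz.
move=> _ [phi [i [Aphi ->]]]; rewrite /= /actA -!scalemxAl; congr (_ *: _).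
rewrite -[f i z](rowK (fun i => f i z)) -[g i z](rowK (fun i => g i z)).
by rewrite !rowE !mulmxK.
Qed.

Lemma Delta_coord {z h k} : Dl (h, k) ->
  h z *m invmx (gen_mx f z) = k z *m invmx (gen_mx g z).
Proof.
move=> /DeltaP [Sh Sk approx]; apply/rowP => j; apply/eqP; rewrite -subr_eq0; apply/eqP.
set iA := invmx _; set iB := invmx _.
have [C C0 boundC] := coord_bounded qf z iA j.
have [C' C'0 boundC'] := coord_bounded qf' z iB j.
apply: (normc_small_eq0 (addr_ge0 C0 C'0)) => e e0.
have [q [spq [hq kq]]] := approx e e0; have [Sq1 Sq2] := gen_span_mem spq.
have -> : (h z *m iA) 0 j - (k z *m iB) 0 j =
    ((h - q.1) z *m iA) 0 j - ((k - q.2) z *m iB) 0 j.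
  rewrite !fctE /= !mulmxBl (gen_span_coord z spq).
  set X := h z *m iA; set Y := k z *m iB; set Z := q.2 z *m iB.
  by rewrite !mxE; ring.
eapply le_trans; first exact: le_normcD.
rewrite normcN mulrDl; apply: lerD.
  apply: le_trans (boundC _ (mem_phB ph Sh Sq1)) _.
  by rewrite ler_wpM2l // ltW.
apply: le_trans (boundC' _ (mem_phB ph' Sk Sq2)) _.
by rewrite ler_wpM2l // ltW.
Qed.

Lemma Delta_functional [h k k'] : Dl (h, k) -> Dl (h, k') -> k = k'.
Proof.
move=> Dk Dk'; apply/funext => z.
apply: (can_inj (mulmxKV (gen_mx_unit qf' z gg))).
by rewrite -(Delta_coord Dk) -(Delta_coord Dk').
Qed.

Lemma Delta_injective {h h' k} : Dl (h, k) -> Dl (h', k) -> h = h'.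
Proof.
move=> Dh Dh'; apply/funext => z.
apply: (can_inj (mulmxKV (gen_mx_unit qf z gf))).
by rewrite (Delta_coord Dh) (Delta_coord Dh').
Qed.

Lemma Delta_closed {u v : nat -> Vfun m Om} {h k} : (forall j, Dl (u j, v j)) ->
  S h -> S' k -> nconv N u h -> nconv N' v k -> Dl (h, k).
Proof.
move=> Duv Sh Sk uh vk; apply/DeltaP; split=> // e e0.
have e2 : 0 < e / 2 by lra.
have [K1 uK1] := uh _ e2; have [K2 vK2] := vk _ e2; set j := maxn K1 K2.
have /DeltaP [Su Sv approx] := Duv j.
have [q [spq [uq vq]]] := approx _ e2; have [Sq1 Sq2] := gen_span_mem spq.
exists q; split=> //; split.
  apply: le_lt_trans (hnorm_distD ph Sh Su Sq1) _.
  by rewrite (hnorm_distC ph Sh Su); have := uK1 j (leq_maxl _ _); lra.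
apply: le_lt_trans (hnorm_distD ph' Sk Sv Sq2) _.
by rewrite (hnorm_distC ph' Sk Sv); have := vK2 j (leq_maxr _ _); lra.
Qed.

End Delta.

Section DeltaFun.
Context {R : realType} {n m : nat} {Om : set (Cn R n)}.
Context {S S' : set (Vfun m Om)} {ip ip' : Vfun m Om -> Vfun m Om -> R[i]}.
Context {f g : 'I_m -> Vfun m Om}.
Hypotheses (m0 : (0 < m)%N) (qf : quasi_free S ip) (qf' : quasi_free S' ip').
Hypotheses (gf : generating_set S ip f) (gg : generating_set S' ip' g).
Local Notation N := (hnorm ip).
Local Notation N' := (hnorm ip').
Local Notation Dl := (Delta S S' ip ip' f g).
Local Notation D := (graph_dom Dl).
Local Notation delta := (graph_fun 0 Dl).

Lemma Delta_graphP h k : Dl (h, k) <-> D h /\ delta h = k.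
Proof. exact: (@graph_funP _ _ 0 _ (Delta_functional qf qf' gf gg)). Qed.

Lemma Delta_graphE : Dl = [set p | D p.1 /\ p.2 = delta p.1].
Proof. exact: (@graph_funE _ _ 0 _ (Delta_functional qf qf' gf gg)). Qed.

Lemma Delta_dom_graph h : D h -> Dl (h, delta h).
Proof. by move=> Dh; apply/Delta_graphP. Qed.

Lemma Delta_dom_sub : D `<=` S.
Proof. by move=> h [k /DeltaP []]. Qed.

Lemma Delta_dom0 : D 0.
Proof. by exists 0; apply: Delta0. Qed.

Lemma Delta_domZD c h h' : D h -> D h' -> D (c *: h + h').
Proof. by move=> [k Dk] [k' Dk']; exists (c *: k + k'); apply: DeltaZD. Qed.

Lemma Delta_fun_mem h : D h -> S' (delta h).
Proof. by move/Delta_dom_graph/DeltaP => []. Qed.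

Lemma Delta_funZD c h h' : D h -> D h' -> delta (c *: h + h') = c *: delta h + delta h'.
Proof.
move=> /Delta_dom_graph Dh /Delta_dom_graph Dh'.
by have /Delta_graphP[] := DeltaZD qf qf' gf gg c Dh Dh'.
Qed.

Lemma Delta_fun_closed (u : nat -> Vfun m Om) h k : (forall j, D (u j)) ->
  S h -> S' k -> nconv N u h -> nconv N' (fun j => delta (u j)) k -> D h /\ delta h = k.
Proof.
move=> Du Sh Sk uh vk; apply/Delta_graphP.
by apply: (Delta_closed qf qf' gf gg _ Sh Sk uh vk) => j; apply: Delta_dom_graph.
Qed.

Lemma Delta_dom_dense h : S h -> forall e, 0 < e -> exists d, D d /\ N (h - d) < e.
Proof.
move=> Sh e e0; have [_ dense _] := gf; have [_ approx] := dense h Sh.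
have [G [spanG hG]] := approx e e0; exists G; split=> //.
apply: (@lspan_ind _ _ _ D _ _ _ G spanG); [exact: Delta_dom0 | exact: Delta_domZD |].
by move=> _ [phi [i [Aphi ->]]]; exists (actA phi (g i)); apply: Delta_gen.
Qed.

Lemma Delta_fun_inj h h' : D h -> D h' -> delta h = delta h' -> h = h'.
Proof.
move=> /Delta_dom_graph Dh /Delta_dom_graph Dh' eq_delta.
by apply: (Delta_injective qf qf' gf gg Dh); rewrite eq_delta.
Qed.

Lemma Delta_fun_dense k : S' k -> forall e, 0 < e -> exists d, D d /\ N' (k - delta d) < e.
Proof.
move=> Sk e e0; have [_ dense _] := gg; have [_ approx] := dense k Sk.
have [G [spanG kG]] := approx e e0.
suff [d Dd dG] : exists2 d, D d & delta d = G by exists d; rewrite dG.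
apply: (@lspan_ind _ _ _ [set k | exists2 d, D d & delta d = k] _ _ _ G spanG).
- by exists 0; [exact: Delta_dom0 | exact: ((Delta_graphP 0 0).1 (Delta0 qf qf')).2].
- move=> c _ _ [d Dd <-] [d' Dd' <-]; exists (c *: d + d'); first exact: Delta_domZD.
  exact: Delta_funZD.
move=> _ [phi [i [Aphi ->]]]; exists (actA phi (f i)).
all: by have /Delta_graphP[] := Delta_gen qf qf' gf gg phi i Aphi.
Qed.

Lemma Delta_dom_act phi h : inAOm phi -> D h -> D (actA phi h).
Proof.
move=> Aphi /Delta_dom_graph Dh; exists (actA phi (delta h)).
exact: Delta_act.
Qed.

Lemma Delta_fun_act phi h : inAOm phi -> D h -> delta (actA phi h) = actA phi (delta h).
Proof.
move=> Aphi /Delta_dom_graph Dh.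
by have /Delta_graphP[] := Delta_act m0 qf qf' gf gg Aphi Dh.
Qed.

End DeltaFun.

Theorem lemma1 (R : realType) (n m : nat) (Om : set (Cn R n))
  (S S' : set (Vfun m Om)) (ip ip' : Vfun m Om -> Vfun m Om -> R[i])
  (f g : 'I_m -> Vfun m Om) :
  bounded_domain Om -> (1 <= m)%N ->
  quasi_free S ip -> quasi_free S' ip' ->
  generating_set S ip f -> generating_set S' ip' g ->
  exists (D : set (Vfun m Om)) (delta : Vfun m Om -> Vfun m Om),
    [/\
     (* delta is a linear transformation from R to R' with domain D *)
     [/\ D `<=` S, D 0,
         (forall (c : R[i]) h h', D h -> D h' -> D (c *: h + h')),
         (forall h, D h -> S' (delta h)) &
         (forall (c : R[i]) h h', D h -> D h' ->
            delta (c *: h + h') = c *: delta h + delta h')],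
     (* Delta is its graph *)
     Delta S S' ip ip' f g = [set p | D p.1 /\ p.2 = delta p.1],
     (* closed, densely defined, one-to-one, with dense range *)
     [/\ (forall (u : nat -> Vfun m Om) h k, (forall j, D (u j)) -> S h -> S' k ->
            nconv (hnorm ip) u h -> nconv (hnorm ip') (fun j => delta (u j)) k ->
            D h /\ delta h = k),
         (forall h, S h -> forall e : R, 0 < e ->
            exists d, D d /\ hnorm ip (h - d) < e),
         (forall h h', D h -> D h' -> delta h = delta h' -> h = h') &
         (forall k, S' k -> forall e : R, 0 < e ->
            exists d, D d /\ hnorm ip' (k - delta d) < e)],
     (* domain and range invariant under the module action *)
     (forall phi h, inAOm phi -> D h -> D (actA phi h)) &
     (forall phi h, inAOm phi -> D h ->
        exists h', D h' /\ delta h' = actA phi (delta h))]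
    /\
    (* delta is a module transformation *)
    (forall phi h, inAOm phi -> D h -> delta (actA phi h) = actA phi (delta h)).
Proof.
move=> _ m0 qf qf' gf gg.
exists (graph_dom (Delta S S' ip ip' f g)), (graph_fun 0 (Delta S S' ip ip' f g)).
split; first split.
- split; first exact: Delta_dom_sub.
  + exact: Delta_dom0 qf qf'.
  + exact: Delta_domZD qf qf' gf gg.
  + exact: Delta_fun_mem qf qf' gf gg.
  + exact: Delta_funZD qf qf' gf gg.
- exact: Delta_graphE qf qf' gf gg.
- split.
  + exact: Delta_fun_closed qf qf' gf gg.
  + exact: Delta_dom_dense qf qf' gf gg.
  + exact: Delta_fun_inj qf qf' gf gg.
  + exact: Delta_fun_dense qf qf' gf gg.
- exact: Delta_dom_act m0 qf qf' gf gg.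
- move=> phi h Aphi Dh; exists (actA phi h).
  by split; [exact: Delta_dom_act | exact: Delta_fun_act].
- exact: Delta_fun_act m0 qf qf' gf gg.
Qed.
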